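(* Let $p\neq 0$ and $\sigma^2\in\{1,-1\}$, let $\sigma$ denote a square root of $\sigma^2$, and fix a choice of sign. Consider the 2D generalized Boussinesq potential equation $$v_{tt}-v_{xx}-(v_x^{p+1})_x\mp v_{xxxx}-\sigma^2 v_{yy}=0$$ for $v(x,y,t)$. (i) For arbitrary $p\neq 0$, the infinitesimal point symmetries of this equation are spanned by the following generators $\mathrm{X}=\xi^x\partial_x+\xi^y\partial_y+\tau\partial_t+\eta\partial_v$: 1. $\tau=0,\ \xi^x=1,\ \xi^y=0,\ \eta=0$; 2. $\tau=0,\ \xi^x=0,\ \xi^y=1,\ \eta=0$; 3. $\tau=1,\ \xi^x=0,\ \xi^y=0,\ \eta=0$; 4. $\tau=y,\ \xi^x=0,\ \xi^y=\sigma^2 t,\ \eta=0$; 5. $\tau=0,\ \xi^x=0,\ \xi^y=0,\ \eta=f_1(y+\sigma t)+f_2(y-\sigma t)$, where $f_1,f_2$ are arbitrary functions of one variable (this corresponds to the general solution $P(y,t)$ of $P_{tt}-\sigma^2P_{yy}=0$). Generators 1–3 are translations, and 4 is a boost in the $(y,t)$-plane. (ii) Additional point symmetries are admitted only when $p=1$. They are given by the scaling combined with a shift in $v$ $$\tau=2t,\qquad \xi^x=x,\qquad \xi^y=2y,\qquad \eta=-(v+x).$$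
   Context: An infinitesimal point symmetry of a PDE for $v(x,y,t)$ is a vector field $\mathrm{X}=\xi^x(x,y,t,v)\partial_x+\xi^y(x,y,t,v)\partial_y+\tau(x,y,t,v)\partial_t+\eta(x,y,t,v)\partial_v$ whose prolongation leaves the equation invariant. Its characteristic is $P=\eta-\xi^x v_x-\xi^y v_y-\tau v_t$. The sign $\mp$ in the equation is fixed but arbitrary; it is the opposite of the sign $\pm$ multiplying $u_{xxxx}$ in the original equation $u_{tt}=u_{xx}+(u^{p+1})_{xx}\pm u_{xxxx}+\sigma^2u_{yy}$, where $u=v_x$. *)

From Stdlib Require Import Reals List.
From Coquelicot Require Import Coquelicot.
Open Scope R_scope.

Definition F4 := R -> R -> R -> R -> R.

Inductive dir4 := Dx4 | Dy4 | Dt4 | Dv4.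

Definition slice4 (d : dir4) (g : F4) (x y t v : R) : R -> R :=
  match d with
  | Dx4 => fun s => g s y t v
  | Dy4 => fun s => g x s t v
  | Dt4 => fun s => g x y s v
  | Dv4 => fun s => g x y t s
  end.

Definition coord4 (d : dir4) (x y t v : R) : R :=
  match d with Dx4 => x | Dy4 => y | Dt4 => t | Dv4 => v end.

Definition pd4 (d : dir4) (g : F4) : F4 :=
  fun x y t v => Derive (slice4 d g x y t v) (coord4 d x y t v).

Definition iter_pd4 (l : list dir4) (g : F4) : F4 := fold_right pd4 g l.

Definition uncurry4 (g : F4) : R * R * R * R -> R :=
  fun q => match q with (x, y, t, v) => g x y t v end.

Definition smooth4 (g : F4) : Prop :=
  forall l : list dir4,
    (forall d x y t v,
        ex_derive (slice4 d (iter_pd4 l g) x y t v) (coord4 d x y t v)) /\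
    (forall q, continuous (uncurry4 (iter_pd4 l g)) q).

Record vfield := VF { xi_x : F4; xi_y : F4; tau : F4; eta : F4 }.

Definition smooth_vf (X : vfield) : Prop :=
  smooth4 (xi_x X) /\ smooth4 (xi_y X) /\ smooth4 (tau X) /\ smooth4 (eta X).

(* A jet point is (x,y,t,j) where  j a b c  is the coordinate
   v_{x^a y^b t^c}  (j 0 0 0 = v). *)
Definition Jet := nat -> nat -> nat -> R.
Definition JetFun := R -> R -> R -> Jet -> R.

Definition upd (j : Jet) (a b c : nat) (s : R) : Jet :=
  fun a' b' c' =>
    if (Nat.eqb a' a && Nat.eqb b' b && Nat.eqb c' c)%bool then s else j a' b' c'.

Definition jpx (F : JetFun) : JetFun := fun x y t j => Derive (fun s => F s y t j) x.
Definition jpy (F : JetFun) : JetFun := fun x y t j => Derive (fun s => F x s t j) y.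
Definition jpt (F : JetFun) : JetFun := fun x y t j => Derive (fun s => F x y s j) t.
Definition jpu (a b c : nat) (F : JetFun) : JetFun :=
  fun x y t j => Derive (fun s => F x y t (upd j a b c s)) (j a b c).

Definition sum3 (n : nat) (f : nat -> nat -> nat -> R) : R :=
  sum_f_R0 (fun a => sum_f_R0 (fun b => sum_f_R0 (fun c => f a b c) n) n) n.

(* All differential functions used below have order
   <= 5, so summing over jet coordinates with a,b,c <= 5 is the full
   (finite) total derivative: the remaining terms have zero partial
   derivative. *)
Definition TDx (F : JetFun) : JetFun := fun x y t j =>
  jpx F x y t j + sum3 5 (fun a b c => j (S a) b c * jpu a b c F x y t j).
Definition TDy (F : JetFun) : JetFun := fun x y t j =>
  jpy F x y t j + sum3 5 (fun a b c => j a (S b) c * jpu a b c F x y t j).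
Definition TDt (F : JetFun) : JetFun := fun x y t j =>
  jpt F x y t j + sum3 5 (fun a b c => j a b (S c) * jpu a b c F x y t j).

Definition TD (a b c : nat) (F : JetFun) : JetFun :=
  Nat.iter a TDx (Nat.iter b TDy (Nat.iter c TDt F)).

Definition lift (g : F4) : JetFun := fun x y t j => g x y t (j 0%nat 0%nat 0%nat).

Definition charP (X : vfield) : JetFun := fun x y t j =>
  lift (eta X) x y t j - lift (xi_x X) x y t j * j 1%nat 0%nat 0%nat
  - lift (xi_y X) x y t j * j 0%nat 1%nat 0%nat
  - lift (tau X) x y t j * j 0%nat 0%nat 1%nat.

Definition phiJ (X : vfield) (a b c : nat) : JetFun := fun x y t j =>
  TD a b c (charP X) x y t j
  + lift (xi_x X) x y t j * j (S a) b c
  + lift (xi_y X) x y t j * j a (S b) c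
  + lift (tau X) x y t j * j a b (S c).

Definition prolong4 (X : vfield) (F : JetFun) : JetFun := fun x y t j =>
  lift (xi_x X) x y t j * jpx F x y t j
  + lift (xi_y X) x y t j * jpy F x y t j
  + lift (tau X) x y t j * jpt F x y t j
  + lift (eta X) x y t j * jpu 0 0 0 F x y t j
  + sum3 4 (fun a b c =>
       if Nat.leb (a + b + c) 4 then
         if Nat.eqb (a + b + c) 0 then 0 else phiJ X a b c x y t j * jpu a b c F x y t j
       else 0).

(* Delta = v_tt - v_xx - (v_x^{p+1})_x - s v_xxxx - sg2 v_yy,
   with (v_x^{p+1})_x = (p+1) v_x^p v_xx, the sign s in {1,-1} encoding the
   fixed sign "-/+" and sg2 = sigma^2 in {1,-1}.  v_x^p is the real power,
   defined for v_x > 0. *)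
Definition Delta (p s sg2 : R) : JetFun := fun x y t j =>
  j 0%nat 0%nat 2%nat - j 2%nat 0%nat 0%nat
  - (p + 1) * Rpower (j 1%nat 0%nat 0%nat) p * j 2%nat 0%nat 0%nat
  - s * j 4%nat 0%nat 0%nat - sg2 * j 0%nat 2%nat 0%nat.

(* infinitesimal point symmetry: pr^(4) X Delta = 0 whenever Delta = 0
   (on the jet-space domain v_x > 0 where v_x^p is defined) *)
Definition is_point_symmetry (p s sg2 : R) (X : vfield) : Prop :=
  forall x y t (j : Jet), 0 < j 1%nat 0%nat 0%nat ->
    Delta p s sg2 x y t j = 0 -> prolong4 X (Delta p s sg2) x y t j = 0.

Definition wave_sol (sg2 : R) (P : R -> R -> R) : Prop :=
  forall y t,
    Derive (fun t' => Derive (fun t'' => P y t'') t') t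
    - sg2 * Derive (fun y' => Derive (fun y'' => P y'' t) y') y = 0.

Definition in_span (sg2 : R) (extra : bool) (X : vfield) : Prop :=
  exists (c1 c2 c3 c4 c5 : R) (P : R -> R -> R),
    (extra = false -> c5 = 0) /\
    wave_sol sg2 P /\
    (forall x y t v,
       xi_x X x y t v = c1 + c5 * x /\
       xi_y X x y t v = c2 + c4 * (sg2 * t) + c5 * (2 * y) /\
       tau X x y t v = c3 + c4 * y + c5 * (2 * t) /\
       eta X x y t v = P y t + c5 * (- (v + x))).

(* The prolongation pr X Delta is a polynomial in the jet coordinates whose coefficients
   are partial derivatives of xi^x, xi^y, tau, eta.

   Necessity: two jets on Delta = 0 that differ in a single coordinate isolate, in the
   symmetry condition, the coefficient of that coordinate.  Step by step this gives
   tau_x = tau_v = xi^y_x = xi^y_v = 0, xi^x_v = 0, tau_t = xi^y_y = 2 xi^x_x,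
   xi^y_t = sigma^2 tau_y, xi^x_y = xi^x_t = eta_vv = 0; the coefficient of v_xx contains
   the three powers 1, v_x^p, v_x^(p-1) of v_x, whence eta_x = eta_v = - xi^x_x, with
   xi^x_x = 0 unless p = 1; finally eta_tt = sigma^2 eta_yy.  Integrating these equations
   gives the span.  Sufficiency: for a field in the span the same expansion vanishes on
   Delta = 0, the scaling generator only because v_x^(p-1) = 1 when p = 1. *)

From Pilot Require Import Defs.
From Stdlib Require Import Reals List Lia Lra Permutation FunctionalExtensionality.
From Coquelicot Require Import Coquelicot.
Import ListNotations.
Open Scope R_scope.

Definition jet_index_eqb (a' b' c' a b c : nat) : bool :=
  (Nat.eqb a' a && Nat.eqb b' b && Nat.eqb c' c)%bool.

Lemma sum3_ext n f g : (forall a b c, f a b c = g a b c) -> sum3 n f = sum3 n g.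
Proof. intros H; unfold sum3; do 3 (apply sum_eq; intros ? _); apply H. Qed.

Lemma sum3_plus n f g :
  sum3 n (fun a b c => f a b c + g a b c) = sum3 n f + sum3 n g.
Proof.
  unfold sum3; rewrite <- plus_sum; apply sum_eq; intros a _.
  rewrite <- plus_sum; apply sum_eq; intros b _; apply plus_sum.
Qed.

Lemma sum3_scal n f k : sum3 n (fun a b c => f a b c * k) = sum3 n f * k.
Proof.
  unfold sum3; rewrite Rmult_comm, scal_sum; apply sum_eq; intros a _.
  rewrite Rmult_comm, scal_sum; apply sum_eq; intros b _.
  rewrite Rmult_comm, scal_sum; reflexivity.
Qed.

Lemma sum3_zero n : sum3 n (fun _ _ _ => 0) = 0.
Proof. unfold sum3; do 2 (apply sum_eq_R0; intros ? _); apply sum_eq_R0; auto. Qed.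

Lemma sum_f_R0_delta (f : nat -> R) a0 n :
  sum_f_R0 (fun a => if Nat.eqb a0 a then f a else 0) n = if Nat.leb a0 n then f a0 else 0.
Proof.
  induction n as [|n IH]; simpl.
  - destruct a0; reflexivity.
  - rewrite IH. destruct (Nat.eqb_spec a0 (S n)) as [->|Hne].
    + replace (Nat.leb (S n) n) with false by (symmetry; apply Nat.leb_gt; lia).
      rewrite Nat.leb_refl; ring.
    + destruct (Nat.leb_spec a0 n), (Nat.leb_spec a0 (S n)); try lia; ring.
Qed.

Lemma sum3_delta n (F : nat -> nat -> nat -> R) a' b' c' :
  (a' <= n)%nat -> (b' <= n)%nat -> (c' <= n)%nat ->
  sum3 n (fun a b c => if jet_index_eqb a' b' c' a b c then F a b c else 0) = F a' b' c'.
Proof.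
  intros Ha Hb Hc; unfold sum3, jet_index_eqb.
  assert (Hle : forall m, (m <= n)%nat -> Nat.leb m n = true) by (intros; apply Nat.leb_le; auto).
  transitivity (sum_f_R0 (fun a => if Nat.eqb a' a then
     sum_f_R0 (fun b => if Nat.eqb b' b then
       sum_f_R0 (fun c => if Nat.eqb c' c then F a b c else 0) n else 0) n else 0) n).
  - apply sum_eq; intros a _; destruct (Nat.eqb a' a); simpl.
    2: do 2 (apply sum_eq_R0; intros ? _); reflexivity.
    apply sum_eq; intros b _; destruct (Nat.eqb b' b); simpl; [reflexivity|].
    apply sum_eq_R0; reflexivity.
  - rewrite sum_f_R0_delta, Hle, sum_f_R0_delta, Hle, sum_f_R0_delta, Hle by auto; ring.
Qed.

(** * Differential expressions *)

Inductive component := XiX | XiY | Tau | Eta.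

Definition component_of (X : vfield) (k : component) : F4 :=
  match k with XiX => xi_x X | XiY => xi_y X | Tau => tau X | Eta => eta X end.

Definition dcomp (X : vfield) (k : component) (l : list dir4) : F4 :=
  iter_pd4 l (component_of X k).

(* Polynomials in the jet coordinates whose coefficients are the partial derivatives
   [dcomp X k l] evaluated at [(x, y, t, v)]. *)
Inductive dexpr :=
  | ECst (z : Z)
  | EJet (a b c : nat)
  | EDer (k : component) (l : list dir4)
  | EAdd (e1 e2 : dexpr)
  | EMul (e1 e2 : dexpr).

Fixpoint eval (X : vfield) (e : dexpr) (x y t : R) (j : Jet) : R :=
  match e with
  | ECst z => IZR z
  | EJet a b c => j a b c
  | EDer k l => dcomp X k l x y t (j 0%nat 0%nat 0%nat)
  | EAdd e1 e2 => eval X e1 x y t j + eval X e2 x y t j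
  | EMul e1 e2 => eval X e1 x y t j * eval X e2 x y t j
  end.

Definition mkAdd (e1 e2 : dexpr) : dexpr :=
  match e1, e2 with ECst Z0, _ => e2 | _, ECst Z0 => e1 | _, _ => EAdd e1 e2 end.

Definition mkMul (e1 e2 : dexpr) : dexpr :=
  match e1, e2 with
  | ECst Z0, _ | _, ECst Z0 => ECst 0
  | ECst 1%Z, _ => e2
  | _, ECst 1%Z => e1
  | _, _ => EMul e1 e2
  end.

Lemma eval_mkAdd X e1 e2 x y t j :
  eval X (mkAdd e1 e2) x y t j = eval X e1 x y t j + eval X e2 x y t j.
Proof.
  destruct e1 as [[]| | | |], e2 as [[]| | | |]; simpl; ring.
Qed.

Lemma eval_mkMul X e1 e2 x y t j :
  eval X (mkMul e1 e2) x y t j = eval X e1 x y t j * eval X e2 x y t j.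
Proof.
  destruct e1 as [[|[]|]| | | |], e2 as [[|[]|]| | | |]; simpl; ring.
Qed.

Inductive base_dir := Bx | By | Bt.

Definition dir_of (d : base_dir) : dir4 :=
  match d with Bx => Dx4 | By => Dy4 | Bt => Dt4 end.

Definition jet_succ (d : base_dir) (a b c : nat) : dexpr :=
  match d with Bx => EJet (S a) b c | By => EJet a (S b) c | Bt => EJet a b (S c) end.

Fixpoint tot_deriv (d : base_dir) (e : dexpr) : dexpr :=
  match e with
  | ECst _ => ECst 0
  | EJet a b c => jet_succ d a b c
  | EDer k l => mkAdd (EDer k (dir_of d :: l)) (mkMul (jet_succ d 0 0 0) (EDer k (Dv4 :: l)))
  | EAdd e1 e2 => mkAdd (tot_deriv d e1) (tot_deriv d e2)
  | EMul e1 e2 => mkAdd (mkMul (tot_deriv d e1) e2) (mkMul e1 (tot_deriv d e2))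
  end.

Fixpoint explicit_deriv (d : base_dir) (e : dexpr) : dexpr :=
  match e with
  | ECst _ | EJet _ _ _ => ECst 0
  | EDer k l => EDer k (dir_of d :: l)
  | EAdd e1 e2 => EAdd (explicit_deriv d e1) (explicit_deriv d e2)
  | EMul e1 e2 => EAdd (EMul (explicit_deriv d e1) e2) (EMul e1 (explicit_deriv d e2))
  end.

Fixpoint jet_deriv (a b c : nat) (e : dexpr) : dexpr :=
  match e with
  | ECst _ => ECst 0
  | EJet a' b' c' => if jet_index_eqb a' b' c' a b c then ECst 1 else ECst 0
  | EDer k l => if jet_index_eqb 0 0 0 a b c then EDer k (Dv4 :: l) else ECst 0
  | EAdd e1 e2 => EAdd (jet_deriv a b c e1) (jet_deriv a b c e2)
  | EMul e1 e2 => EAdd (EMul (jet_deriv a b c e1) e2) (EMul e1 (jet_deriv a b c e2))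
  end.

Fixpoint jet_order_le (n : nat) (e : dexpr) : bool :=
  match e with
  | EJet a b c => (Nat.leb a n && Nat.leb b n && Nat.leb c n)%bool
  | EAdd e1 e2 | EMul e1 e2 => (jet_order_le n e1 && jet_order_le n e2)%bool
  | _ => true
  end.

(* The chain rule behind [TDx], [TDy], [TDt], at the level of syntax. *)
Lemma tot_deriv_split X d e x y t j : jet_order_le 5 e = true ->
  eval X (explicit_deriv d e) x y t j
  + sum3 5 (fun a b c => eval X (jet_succ d a b c) x y t j * eval X (jet_deriv a b c e) x y t j)
  = eval X (tot_deriv d e) x y t j.
Proof.
  assert (Hpick : forall (F : nat -> nat -> nat -> R) a' b' c' e0,
    (a' <= 5)%nat -> (b' <= 5)%nat -> (c' <= 5)%nat ->
    sum3 5 (fun a b c => F a b c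
      * eval X (if jet_index_eqb a' b' c' a b c then e0 else ECst 0) x y t j)
    = F a' b' c' * eval X e0 x y t j).
  { intros F a' b' c' e0 Ha Hb Hc.
    rewrite <- (sum3_delta 5 (fun a b c => F a b c * eval X e0 x y t j) a' b' c') by auto.
    apply sum3_ext; intros a b c; destruct (jet_index_eqb a' b' c' a b c); simpl; ring. }
  induction e as [z|a' b' c'|k l|e1 IH1 e2 IH2|e1 IH1 e2 IH2]; simpl; intros Hw.
  - rewrite (sum3_ext _ _ (fun _ _ _ => 0)) by (intros; ring). rewrite sum3_zero; ring.
  - apply andb_prop in Hw as [Hw Hc]; apply andb_prop in Hw as [Ha Hb].
    apply Nat.leb_le in Ha, Hb, Hc.
    rewrite (Hpick (fun a b c => eval X (jet_succ d a b c) x y t j)) by auto; simpl; ring.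
  - rewrite (Hpick (fun a b c => eval X (jet_succ d a b c) x y t j)) by lia.
    destruct d; simpl; ring.
  - apply andb_prop in Hw as [H1 H2].
    rewrite eval_mkAdd, <- IH1, <- IH2 by auto.
    erewrite sum3_ext by (intros; simpl; rewrite Rmult_plus_distr_l; reflexivity).
    rewrite sum3_plus; ring.
  - apply andb_prop in Hw as [H1 H2].
    rewrite eval_mkAdd, !eval_mkMul, <- IH1, <- IH2 by auto.
    erewrite sum3_ext.
    2:{ intros a b c; simpl.
        replace (_ * _) with
          (eval X (jet_succ d a b c) x y t j * eval X (jet_deriv a b c e1) x y t j * eval X e2 x y t j
           + eval X (jet_succ d a b c) x y t j * eval X (jet_deriv a b c e2) x y t j * eval X e1 x y t j)
          by ring.
        reflexivity. }
    rewrite sum3_plus, !sum3_scal; ring.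
Qed.

Definition smooth_components (X : vfield) : Prop := forall k, smooth4 (component_of X k).

Lemma smooth_components_of X : smooth_vf X -> smooth_components X.
Proof. intros (H1 & H2 & H3 & H4) k; destruct k; assumption. Qed.

Definition jslice (d : base_dir) (F : JetFun) (x y t : R) (j : Jet) : R -> R :=
  match d with
  | Bx => fun s => F s y t j
  | By => fun s => F x s t j
  | Bt => fun s => F x y s j
  end.

Definition bcoord (d : base_dir) (x y t : R) : R :=
  match d with Bx => x | By => y | Bt => t end.

Definition TDdir (d : base_dir) : JetFun -> JetFun :=
  match d with Bx => TDx | By => TDy | Bt => TDt end.

Lemma TDdir_unfold X d F x y t j :
  TDdir d F x y t j = Derive (jslice d F x y t j) (bcoord d x y t)
    + sum3 5 (fun a b c => eval X (jet_succ d a b c) x y t j * jpu a b c F x y t j).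
Proof. destruct d; reflexivity. Qed.

Lemma upd_same (j : Jet) a b c : upd j a b c (j a b c) = j.
Proof.
  extensionality a'; extensionality b'; extensionality c'; unfold upd.
  destruct (Nat.eqb_spec a' a), (Nat.eqb_spec b' b), (Nat.eqb_spec c' c); subst; reflexivity.
Qed.

Section EvalDerivatives.

Variable X : vfield.
Hypothesis HX : smooth_components X.

Lemma is_derive_dcomp k l d x y t v :
  is_derive (slice4 d (dcomp X k l) x y t v) (coord4 d x y t v) (dcomp X k (d :: l) x y t v).
Proof. apply Derive_correct, (proj1 (HX k l)). Qed.

Lemma is_derive_explicit d e x y t j :
  is_derive (jslice d (eval X e) x y t j) (bcoord d x y t) (eval X (explicit_deriv d e) x y t j).
Proof.
  induction e as [z|a b c|k l|e1 IH1 e2 IH2|e1 IH1 e2 IH2].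
  - destruct d; exact (is_derive_const _ _).
  - destruct d; exact (is_derive_const _ _).
  - destruct d;
      [apply (is_derive_dcomp k l Dx4)|apply (is_derive_dcomp k l Dy4)|apply (is_derive_dcomp k l Dt4)].
  - destruct d; exact (is_derive_plus _ _ _ _ _ IH1 IH2).
  - destruct d; exact (is_derive_mult _ _ _ _ _ IH1 IH2 Rmult_comm).
Qed.

Lemma is_derive_jet e a b c x y t j s0 :
  is_derive (fun s => eval X e x y t (upd j a b c s)) s0
    (eval X (jet_deriv a b c e) x y t (upd j a b c s0)).
Proof.
  induction e as [z|a' b' c'|k l|e1 IH1 e2 IH2|e1 IH1 e2 IH2]; simpl.
  - exact (is_derive_const _ _).
  - unfold jet_index_eqb, upd; destruct (_ && _)%bool; simpl; [exact (is_derive_id _)|exact (is_derive_const _ _)].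
  - unfold jet_index_eqb, upd; destruct a, b, c; simpl;
      first [apply (is_derive_dcomp k l Dv4 x y t s0) | exact (is_derive_const _ _)].
  - exact (is_derive_plus _ _ _ _ _ IH1 IH2).
  - exact (is_derive_mult _ _ _ _ _ IH1 IH2 Rmult_comm).
Qed.

Lemma TDdir_eval d e : jet_order_le 5 e = true -> TDdir d (eval X e) = eval X (tot_deriv d e).
Proof.
  intros Hw; extensionality x; extensionality y; extensionality t; extensionality j.
  rewrite (TDdir_unfold X), <- tot_deriv_split by auto; f_equal.
  - apply is_derive_unique, is_derive_explicit.
  - apply sum3_ext; intros a b c; f_equal; unfold jpu.
    rewrite <- (upd_same j a b c) at 2.
    apply is_derive_unique, is_derive_jet.
Qed.

End EvalDerivatives.

Definition tot_derivs (a b c : nat) (e : dexpr) : dexpr :=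
  Nat.iter a (tot_deriv Bx) (Nat.iter b (tot_deriv By) (Nat.iter c (tot_deriv Bt) e)).

Lemma jet_order_le_mono n m e : (n <= m)%nat -> jet_order_le n e = true -> jet_order_le m e = true.
Proof.
  intros Hnm; induction e; simpl; auto; rewrite ?Bool.andb_true_iff; try tauto.
  rewrite !Nat.leb_le; lia.
Qed.

Lemma jet_order_le_mkAdd n e1 e2 :
  jet_order_le n e1 = true -> jet_order_le n e2 = true -> jet_order_le n (mkAdd e1 e2) = true.
Proof.
  intros H1 H2; destruct e1 as [[]| | | |], e2 as [[]| | | |]; simpl in *; rewrite ?H1, ?H2; auto.
Qed.

Lemma jet_order_le_mkMul n e1 e2 :
  jet_order_le n e1 = true -> jet_order_le n e2 = true -> jet_order_le n (mkMul e1 e2) = true.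
Proof.
  intros H1 H2; destruct e1 as [[|[]|]| | | |], e2 as [[|[]|]| | | |]; simpl in *; rewrite ?H1, ?H2; auto.
Qed.

Lemma jet_order_le_tot_deriv n d e :
  jet_order_le n e = true -> jet_order_le (S n) (tot_deriv d e) = true.
Proof.
  assert (Hsucc : forall a b c, (a <= n)%nat -> (b <= n)%nat -> (c <= n)%nat ->
            jet_order_le (S n) (jet_succ d a b c) = true).
  { intros; destruct d; simpl; rewrite !(proj2 (Nat.leb_le _ _)) by lia; reflexivity. }
  induction e; cbn [tot_deriv jet_order_le]; rewrite ?Bool.andb_true_iff, ?Nat.leb_le; intros H.
  - reflexivity.
  - apply Hsucc; tauto.
  - apply jet_order_le_mkAdd; [reflexivity|].
    apply jet_order_le_mkMul; [apply Hsucc; lia|reflexivity].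
  - apply jet_order_le_mkAdd; tauto.
  - destruct H as [H1 H2]; specialize (IHe1 H1); specialize (IHe2 H2).
    apply jet_order_le_mkAdd; apply jet_order_le_mkMul; auto; apply (jet_order_le_mono n); auto.
Qed.

Lemma jet_order_le_iter n d c e :
  jet_order_le n e = true -> jet_order_le (n + c) (Nat.iter c (tot_deriv d) e) = true.
Proof.
  induction c; simpl; intros H; [rewrite Nat.add_0_r; auto|].
  rewrite Nat.add_succ_r; apply jet_order_le_tot_deriv; auto.
Qed.

Section TotalDerivatives.

Variable X : vfield.
Hypothesis HX : smooth_components X.

Lemma iter_TDdir_eval d c n e : jet_order_le n e = true -> (n + c <= 6)%nat ->
  Nat.iter c (TDdir d) (eval X e) = eval X (Nat.iter c (tot_deriv d) e).
Proof.
  induction c; intros Hw Hn; simpl; auto.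
  rewrite IHc by (auto; lia); apply TDdir_eval; auto.
  apply (jet_order_le_mono (n + c)); [lia|]; apply jet_order_le_iter; auto.
Qed.

(* [TD] is only faithful up to jet order 6, because [TDx], [TDy], [TDt] sum over
   jet coordinates of order at most 5 in each variable. *)
Lemma TD_eval a b c n e : jet_order_le n e = true -> (n + a + b + c <= 6)%nat ->
  TD a b c (eval X e) = eval X (tot_derivs a b c e).
Proof.
  intros Hw Hn; unfold TD, tot_derivs.
  rewrite (iter_TDdir_eval Bt c n), (iter_TDdir_eval By b (n + c)), (iter_TDdir_eval Bx a (n + c + b));
    try lia; repeat apply jet_order_le_iter; auto.
Qed.

End TotalDerivatives.

Definition char_expr : dexpr :=
  EAdd (EDer Eta [])
    (EMul (ECst (-1))
       (EAdd (EMul (EDer XiX []) (EJet 1 0 0))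
          (EAdd (EMul (EDer XiY []) (EJet 0 1 0)) (EMul (EDer Tau []) (EJet 0 0 1))))).

Definition phi_expr (a b c : nat) : dexpr :=
  EAdd (tot_derivs a b c char_expr)
    (EAdd (EMul (EDer XiX []) (EJet (S a) b c))
       (EAdd (EMul (EDer XiY []) (EJet a (S b) c)) (EMul (EDer Tau []) (EJet a b (S c))))).

Lemma phiJ_eval X a b c x y t j : smooth_components X -> (a + b + c <= 5)%nat ->
  phiJ X a b c x y t j = eval X (phi_expr a b c) x y t j.
Proof.
  intros HX H.
  assert (Hchar : charP X = eval X char_expr)
    by (extensionality x'; extensionality y'; extensionality t'; extensionality j';
        unfold charP, lift; simpl; ring).
  unfold phiJ; rewrite Hchar, (TD_eval X HX a b c 1) by (auto; lia).
  simpl; unfold lift; ring.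
Qed.

(** * The prolonged equation *)

Lemma Derive_affine (f : R -> R) k x : (forall s, f s = k * s + f 0) -> Derive f x = k.
Proof. intros H; rewrite (Derive_ext f _ x H); apply is_derive_unique; auto_derive; auto; ring. Qed.

Lemma is_derive_Rpower p w : 0 < w -> is_derive (fun s => Rpower s p) w (p * Rpower w (p - 1)).
Proof. intros Hw; apply is_derive_Reals, derivable_pt_lim_power, Hw. Qed.

Section DeltaDerivatives.

Variables p s sg2 x y t : R.
Variable j : Jet.

Lemma jpu_Delta_other a b c :
  jet_index_eqb 0 0 2 a b c = false -> jet_index_eqb 2 0 0 a b c = false ->
  jet_index_eqb 1 0 0 a b c = false -> jet_index_eqb 4 0 0 a b c = false ->
  jet_index_eqb 0 2 0 a b c = false ->
  jpu a b c (Defs.Delta p s sg2) x y t j = 0.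
Proof.
  unfold jet_index_eqb; intros H1 H2 H3 H4 H5; unfold jpu.
  rewrite (Derive_ext _ (fun _ => Defs.Delta p s sg2 x y t j)) by
    (intros; unfold Defs.Delta, upd; rewrite H1, H2, H3, H4, H5; reflexivity).
  apply Derive_const.
Qed.

Ltac jpu_affine := unfold jpu, Defs.Delta, upd; cbn [Nat.eqb andb]; apply Derive_affine; intros; ring.

Lemma jpu_Delta_002 : jpu 0 0 2 (Defs.Delta p s sg2) x y t j = 1.
Proof. jpu_affine. Qed.

Lemma jpu_Delta_020 : jpu 0 2 0 (Defs.Delta p s sg2) x y t j = - sg2.
Proof. jpu_affine. Qed.

Lemma jpu_Delta_400 : jpu 4 0 0 (Defs.Delta p s sg2) x y t j = - s.
Proof. jpu_affine. Qed.

Lemma jpu_Delta_200 :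
  jpu 2 0 0 (Defs.Delta p s sg2) x y t j = - (1 + (p + 1) * Rpower (j 1%nat 0%nat 0%nat) p).
Proof. jpu_affine. Qed.

Lemma jpu_Delta_100 : 0 < j 1%nat 0%nat 0%nat ->
  jpu 1 0 0 (Defs.Delta p s sg2) x y t j
  = - ((p + 1) * (p * Rpower (j 1%nat 0%nat 0%nat) (p - 1)) * j 2%nat 0%nat 0%nat).
Proof.
  intros Hw.
  assert (Hd : Derive (fun w : R => Rpower w p) (j 1%nat 0%nat 0%nat)
               = p * Rpower (j 1%nat 0%nat 0%nat) (p - 1))
    by (apply is_derive_unique, is_derive_Rpower, Hw).
  unfold jpu, Defs.Delta, upd; cbn [Nat.eqb andb].
  apply is_derive_unique; auto_derive; [eexists; now apply is_derive_Rpower|].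
  rewrite Hd; ring.
Qed.

Lemma jpxyt_Delta :
  jpx (Defs.Delta p s sg2) x y t j = 0 /\ jpy (Defs.Delta p s sg2) x y t j = 0
  /\ jpt (Defs.Delta p s sg2) x y t j = 0.
Proof. unfold jpx, jpy, jpt, Defs.Delta; repeat split; apply Derive_const. Qed.

End DeltaDerivatives.

(* [phi a b c] stands for the prolongation coefficient phi^J with J = x^a y^b t^c. *)
Definition prolonged_Delta (phi : nat -> nat -> nat -> R) (p s sg2 : R) (j : Jet) : R :=
  phi 0%nat 0%nat 2%nat
  - (1 + (p + 1) * Rpower (j 1%nat 0%nat 0%nat) p) * phi 2%nat 0%nat 0%nat
  - (p + 1) * (p * Rpower (j 1%nat 0%nat 0%nat) (p - 1)) * j 2%nat 0%nat 0%nat * phi 1%nat 0%nat 0%nat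
  - s * phi 4%nat 0%nat 0%nat - sg2 * phi 0%nat 2%nat 0%nat.

Lemma prolong4_Delta X p s sg2 x y t j : 0 < j 1%nat 0%nat 0%nat ->
  prolong4 X (Defs.Delta p s sg2) x y t j
  = prolonged_Delta (fun a b c => phiJ X a b c x y t j) p s sg2 j.
Proof.
  intros Hw; unfold prolong4, prolonged_Delta, sum3.
  destruct (jpxyt_Delta p s sg2 x y t j) as (-> & -> & ->).
  cbn [sum_f_R0 Nat.add Nat.leb Nat.eqb].
  rewrite jpu_Delta_002, jpu_Delta_020, jpu_Delta_400, jpu_Delta_200, jpu_Delta_100 by auto.
  repeat rewrite jpu_Delta_other by reflexivity.
  ring.
Qed.

(** * Symmetry of mixed partial derivatives *)

Definition Q4 := (R * R * R * R)%type.

Definition getd (d : dir4) (q : Q4) : R :=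
  match q with (x, y, t, v) => coord4 d x y t v end.

Definition setd (d : dir4) (s : R) (q : Q4) : Q4 :=
  match q with
  | (x, y, t, v) =>
      match d with
      | Dx4 => (s, y, t, v) | Dy4 => (x, s, t, v) | Dt4 => (x, y, s, v) | Dv4 => (x, y, t, s)
      end
  end.

Lemma getd_setd d s q : getd d (setd d s q) = s.
Proof. destruct q as [[[]]], d; reflexivity. Qed.

Lemma getd_setd_other d d' s q : d <> d' -> getd d' (setd d s q) = getd d' q.
Proof. destruct q as [[[]]], d, d'; simpl; congruence. Qed.

Lemma setd_setd d s s' q : setd d s (setd d s' q) = setd d s q.
Proof. destruct q as [[[]]], d; reflexivity. Qed.

Lemma setd_comm d d' s s' q : d <> d' -> setd d s (setd d' s' q) = setd d' s' (setd d s q).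
Proof. destruct q as [[[]]], d, d'; simpl; congruence. Qed.

Lemma pd4_at d g q : uncurry4 (pd4 d g) q = Derive (fun s => uncurry4 g (setd d s q)) (getd d q).
Proof. destruct q as [[[]]], d; reflexivity. Qed.

Lemma ex_derive_at d g q s0 : smooth4 g -> ex_derive (fun s => uncurry4 g (setd d s q)) s0.
Proof.
  intros Hg; destruct q as [[[x y] t] v].
  destruct d; [apply (proj1 (Hg nil) Dx4 s0 y t v)|apply (proj1 (Hg nil) Dy4 x s0 t v)
              |apply (proj1 (Hg nil) Dt4 x y s0 v)|apply (proj1 (Hg nil) Dv4 x y t s0)].
Qed.

Lemma iter_pd4_app l1 l2 g : iter_pd4 (l1 ++ l2) g = iter_pd4 l1 (iter_pd4 l2 g).
Proof. apply fold_right_app. Qed.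

Lemma smooth4_iter_pd4 l g : smooth4 g -> smooth4 (iter_pd4 l g).
Proof. intros Hg l'; rewrite <- iter_pd4_app; apply Hg. Qed.

Lemma smooth4_dcomp X k l : smooth_components X -> smooth4 (dcomp X k l).
Proof. intros HX; apply smooth4_iter_pd4, HX. Qed.

Lemma continuous_pair {U V W : UniformSpace} (f : U -> V) (g : U -> W) z :
  continuous f z -> continuous g z -> continuous (fun w => (f w, g w)) z.
Proof.
  intros Hf Hg; apply (continuous_comp_2 f g (fun a b => (a, b))); auto.
  apply (continuous_ext (fun w => w)); [intros []; reflexivity|apply continuous_id].
Qed.

Lemma continuous_setd (u w : R -> R -> R) d1 d2 q z :
  continuous (fun r : R * R => u (fst r) (snd r)) z ->
  continuous (fun r : R * R => w (fst r) (snd r)) z ->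
  continuous (fun r : R * R => setd d2 (w (fst r) (snd r)) (setd d1 (u (fst r) (snd r)) q)) z.
Proof.
  intros Hu Hw; destruct q as [[[x y] t] v].
  destruct d1, d2; simpl; repeat apply continuous_pair; auto; apply continuous_const.
Qed.

Lemma Schwarz_setd g d1 d2 q : smooth4 g -> d1 <> d2 ->
  Derive (fun u => Derive (fun w => uncurry4 g (setd d2 w (setd d1 u q))) (getd d2 q)) (getd d1 q)
  = Derive (fun w => Derive (fun u => uncurry4 g (setd d2 w (setd d1 u q))) (getd d1 q)) (getd d2 q).
Proof.
  intros Hg Hd.
  assert (Hd' : d2 <> d1) by congruence.
  set (f := fun u w => uncurry4 g (setd d2 w (setd d1 u q))).
  change (Derive (fun u => Derive (fun w => f u w) (getd d2 q)) (getd d1 q)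
          = Derive (fun w => Derive (fun u => f u w) (getd d1 q)) (getd d2 q)).
  assert (Df2 : forall u w, Derive (fun r => f u r) w = uncurry4 (pd4 d2 g) (setd d2 w (setd d1 u q))).
  { intros u w; rewrite pd4_at, getd_setd; apply Derive_ext; intros; unfold f; rewrite setd_setd; reflexivity. }
  assert (Df1 : forall u w, Derive (fun r => f r w) u = uncurry4 (pd4 d1 g) (setd d1 u (setd d2 w q))).
  { intros u w; rewrite pd4_at, getd_setd; apply Derive_ext; intros.
    unfold f; rewrite setd_setd, setd_comm by auto; reflexivity. }
  assert (Hcont : forall l, continuity_2d_pt (fun u w => uncurry4 (iter_pd4 l g) (setd d2 w (setd d1 u q)))
                    (getd d1 q) (getd d2 q)).
  { intros l; apply continuity_2d_pt_filterlim.
    apply (continuous_comp (fun r : R * R => setd d2 (snd r) (setd d1 (fst r) q))).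
    - apply (continuous_setd (fun a _ => a) (fun _ b => b)); [apply continuous_fst|apply continuous_snd].
    - apply (proj2 (Hg l)). }
  apply Schwarz.
  - exists (mkposreal 1 Rlt_0_1); intros u w _ _; repeat split.
    + apply (ex_derive_ext (fun r => uncurry4 g (setd d1 r (setd d2 w q))));
        [intros; unfold f; rewrite setd_comm by auto; reflexivity|apply ex_derive_at, Hg].
    + apply ex_derive_at, Hg.
    + apply (ex_derive_ext (fun r => uncurry4 (pd4 d2 g) (setd d1 r (setd d2 w q))));
        [intros; rewrite Df2, setd_comm by auto; reflexivity|apply ex_derive_at, (smooth4_iter_pd4 [d2]), Hg].
    + apply (ex_derive_ext (fun r => uncurry4 (pd4 d1 g) (setd d2 r (setd d1 u q))));
        [intros; rewrite Df1, setd_comm by auto; reflexivity|apply ex_derive_at, (smooth4_iter_pd4 [d1]), Hg].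
  - apply (continuity_2d_pt_ext (fun u w => uncurry4 (iter_pd4 [d1; d2] g) (setd d2 w (setd d1 u q))));
      [|apply Hcont].
    intros u w; simpl; rewrite pd4_at, getd_setd_other, getd_setd by auto; apply Derive_ext; intros.
    rewrite Df2, setd_comm, setd_setd by auto; reflexivity.
  - apply (continuity_2d_pt_ext (fun u w => uncurry4 (iter_pd4 [d2; d1] g) (setd d2 w (setd d1 u q))));
      [|apply Hcont].
    intros u w; simpl; rewrite pd4_at, getd_setd; apply Derive_ext; intros.
    rewrite Df1, setd_setd, setd_comm by auto; reflexivity.
Qed.

Lemma pd4_comm_at g d1 d2 q : smooth4 g -> d1 <> d2 ->
  uncurry4 (pd4 d1 (pd4 d2 g)) q = uncurry4 (pd4 d2 (pd4 d1 g)) q.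
Proof.
  intros Hg Hd; rewrite !pd4_at.
  rewrite (Derive_ext (fun u => uncurry4 (pd4 d2 g) (setd d1 u q))
             (fun u => Derive (fun w => uncurry4 g (setd d2 w (setd d1 u q))) (getd d2 q)))
    by (intros; rewrite pd4_at, getd_setd_other by auto; reflexivity).
  rewrite (Derive_ext (fun w => uncurry4 (pd4 d1 g) (setd d2 w q))
             (fun w => Derive (fun u => uncurry4 g (setd d2 w (setd d1 u q))) (getd d1 q)))
    by (intros; rewrite pd4_at, getd_setd_other by congruence; apply Derive_ext; intros;
        rewrite setd_comm by auto; reflexivity).
  apply Schwarz_setd; assumption.
Qed.

Lemma dir4_eq_dec (d d' : dir4) : {d = d'} + {d <> d'}.
Proof. decide equality. Defined.

Lemma pd4_comm g d1 d2 : smooth4 g -> pd4 d1 (pd4 d2 g) = pd4 d2 (pd4 d1 g).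
Proof.
  intros Hg; destruct (dir4_eq_dec d1 d2) as [->|Hd]; [reflexivity|].
  extensionality x; extensionality y; extensionality t; extensionality v.
  exact (pd4_comm_at g d1 d2 (x, y, t, v) Hg Hd).
Qed.

Lemma iter_pd4_perm g l l' : smooth4 g -> Permutation l l' -> iter_pd4 l g = iter_pd4 l' g.
Proof.
  intros Hg HP; induction HP; simpl; auto.
  - rewrite IHHP; reflexivity.
  - apply pd4_comm, smooth4_iter_pd4, Hg.
  - rewrite IHHP1; auto.
Qed.

(** * Normal forms of differential expressions *)

Definition dir_rank (d : dir4) : nat :=
  match d with Dx4 => 0 | Dy4 => 1 | Dt4 => 2 | Dv4 => 3 end.

Fixpoint insert_dir (d : dir4) (l : list dir4) : list dir4 :=
  match l with
  | [] => [d]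
  | d' :: l' => if Nat.leb (dir_rank d) (dir_rank d') then d :: l else d' :: insert_dir d l'
  end.

Fixpoint sort_dirs (l : list dir4) : list dir4 :=
  match l with [] => [] | d :: l' => insert_dir d (sort_dirs l') end.

Lemma sort_dirs_perm l : Permutation l (sort_dirs l).
Proof.
  assert (Hins : forall d l, Permutation (d :: l) (insert_dir d l)).
  { induction l0 as [|d' l' IH]; simpl; auto.
    destruct (Nat.leb _ _); auto.
    eapply perm_trans; [apply perm_swap|]; apply perm_skip, IH. }
  induction l; simpl; auto.
  eapply perm_trans; [apply perm_skip, IHl|apply Hins].
Qed.

(* A rule [(k, m)] records that the derivative [dcomp X k m] vanishes identically;
   then so does every [dcomp X k l] with [m] a sub-multiset of [l]. *)
Definition rule := (component * list dir4)%type.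

Definition rules_hold (X : vfield) (rs : list rule) : Prop :=
  List.Forall (fun r => forall x y t v, dcomp X (fst r) (snd r) x y t v = 0) rs.

Lemma component_eq_dec (k k' : component) : {k = k'} + {k <> k'}.
Proof. decide equality. Defined.

Definition sub_multiset (m l : list dir4) : bool :=
  forallb (fun d => Nat.leb (count_occ dir4_eq_dec m d) (count_occ dir4_eq_dec l d))
    [Dx4; Dy4; Dt4; Dv4].

Definition vanishes (rs : list rule) (k : component) (l : list dir4) : bool :=
  existsb (fun r => if component_eq_dec (fst r) k then sub_multiset (snd r) l else false) rs.

Lemma sub_multiset_perm m l : sub_multiset m l = true -> exists l', Permutation l (l' ++ m).
Proof.
  intros H.
  assert (Hc : forall d, (count_occ dir4_eq_dec m d <= count_occ dir4_eq_dec l d)%nat).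
  { unfold sub_multiset in H; rewrite forallb_forall in H.
    intros d; apply Nat.leb_le, H; destruct d; simpl; tauto. }
  clear H; revert l Hc; induction m as [|d m IH]; intros l Hc.
  - exists l; rewrite app_nil_r; apply Permutation_refl.
  - assert (Hin : In d l).
    { apply (count_occ_In dir4_eq_dec); specialize (Hc d); simpl in Hc.
      destruct (dir4_eq_dec d d); [lia|congruence]. }
    apply in_split in Hin as [l1 [l2 ->]].
    destruct (IH (l1 ++ l2)) as [l' Hl'].
    { intros d'; specialize (Hc d'); simpl in Hc; rewrite count_occ_app in *; simpl in Hc.
      destruct (dir4_eq_dec d d'); lia. }
    exists l'; eapply perm_trans; [apply Permutation_sym, Permutation_middle|].
    eapply perm_trans; [apply perm_skip, Hl'|apply Permutation_middle].
Qed.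

Lemma iter_pd4_zero l x y t v : iter_pd4 l (fun _ _ _ _ => 0) x y t v = 0.
Proof.
  revert x y t v; induction l as [|d l IH]; intros; simpl; auto.
  unfold pd4; rewrite (Derive_ext _ (fun _ => 0)) by (intros; destruct d; apply IH).
  apply Derive_const.
Qed.

Lemma vanishes_sound X rs k l : smooth_components X -> rules_hold X rs ->
  vanishes rs k l = true -> forall x y t v, dcomp X k l x y t v = 0.
Proof.
  intros HX Hrs Hv x y t v.
  apply existsb_exists in Hv as [[k' m] [Hin Hm]]; simpl in Hm.
  destruct (component_eq_dec k' k) as [<-|]; [|discriminate].
  destruct (sub_multiset_perm m l Hm) as [l' Hperm].
  unfold dcomp; rewrite (iter_pd4_perm _ l (l' ++ m) (HX k') Hperm), iter_pd4_app.
  replace (iter_pd4 m (component_of X k')) with (fun _ _ _ _ : R => 0); [apply iter_pd4_zero|].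
  unfold rules_hold in Hrs; rewrite Forall_forall in Hrs.
  extensionality x'; extensionality y'; extensionality t'; extensionality v'.
  symmetry; exact (Hrs _ Hin x' y' t' v').
Qed.

Lemma rules_hold_app X rs1 rs2 : rules_hold X rs1 -> rules_hold X rs2 -> rules_hold X (rs1 ++ rs2).
Proof. intros H1 H2; apply Forall_app; split; assumption. Qed.

Lemma pd4_pd4_const g d0 c d : (forall x y t v, pd4 d0 g x y t v = c) ->
  forall x y t v, pd4 d (pd4 d0 g) x y t v = 0.
Proof.
  intros H x y t v; unfold pd4 at 1.
  rewrite (Derive_ext _ (fun _ => c)) by (intros; destruct d; apply H).
  apply Derive_const.
Qed.

(* [nz] over-approximates the support of the jet; atoms are put in a canonical
   order so that [ring] identifies equal mixed partials. *)
Fixpoint simplify (nz : nat -> nat -> nat -> bool) (rs : list rule) (e : dexpr) : dexpr :=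
  match e with
  | ECst z => ECst z
  | EJet a b c => if nz a b c then EJet a b c else ECst 0
  | EDer k l => if vanishes rs k l then ECst 0 else EDer k (sort_dirs l)
  | EAdd e1 e2 => mkAdd (simplify nz rs e1) (simplify nz rs e2)
  | EMul e1 e2 => mkMul (simplify nz rs e1) (simplify nz rs e2)
  end.

Lemma simplify_correct X nz rs e x y t j : smooth_components X -> rules_hold X rs ->
  (forall a b c, nz a b c = false -> j a b c = 0) ->
  eval X e x y t j = eval X (simplify nz rs e) x y t j.
Proof.
  intros HX Hrs Hnz; induction e; simpl.
  - reflexivity.
  - destruct (nz a b c) eqn:E; simpl; auto.
  - destruct (vanishes rs k l) eqn:E; simpl.
    + apply (vanishes_sound X rs); auto.
    + unfold dcomp; rewrite (iter_pd4_perm _ l (sort_dirs l) (HX k)); auto; apply sort_dirs_perm.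
  - rewrite eval_mkAdd; congruence.
  - rewrite eval_mkMul; congruence.
Qed.

Definition jet_entry := (nat * nat * nat * R)%type.

Definition entry (a b c : nat) (r : R) : jet_entry := (a, b, c, r).

Fixpoint jet_of (L : list jet_entry) (a b c : nat) : R :=
  match L with
  | [] => 0
  | (a', b', c', r) :: L' => if jet_index_eqb a b c a' b' c' then r else jet_of L' a b c
  end.

Fixpoint in_support (L : list jet_entry) (a b c : nat) : bool :=
  match L with
  | [] => false
  | (a', b', c', _) :: L' => (jet_index_eqb a b c a' b' c' || in_support L' a b c)%bool
  end.

Lemma jet_of_outside L a b c : in_support L a b c = false -> jet_of L a b c = 0.
Proof.
  induction L as [|[[[a' b'] c'] r] L IH]; simpl; auto.
  destruct (jet_index_eqb a b c a' b' c'); [discriminate|auto].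
Qed.

Lemma prolong4_Delta_simplified X p s sg2 nz rs x y t j :
  smooth_components X -> rules_hold X rs ->
  (forall a b c, nz a b c = false -> j a b c = 0) -> 0 < j 1%nat 0%nat 0%nat ->
  prolong4 X (Defs.Delta p s sg2) x y t j
  = prolonged_Delta (fun a b c => eval X (simplify nz rs (phi_expr a b c)) x y t j) p s sg2 j.
Proof.
  intros HX Hrs Hnz Hw; rewrite prolong4_Delta by exact Hw.
  unfold prolonged_Delta; rewrite !phiJ_eval by (auto; lia).
  rewrite <- !simplify_correct; auto.
Qed.

Ltac expand_simplified :=
  unfold prolonged_Delta;
  repeat match goal with
  | |- context [simplify ?nz ?rs (phi_expr ?a ?b ?c)] =>
      let e := eval vm_compute in (simplify nz rs (phi_expr a b c)) in
      change (simplify nz rs (phi_expr a b c)) with e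
  end;
  cbn [eval entry jet_of jet_index_eqb Nat.eqb andb].

Lemma affine_of_const_derive (f : R -> R) c : (forall s, is_derive f s c) ->
  forall a, f a = f 0 + c * a.
Proof.
  intros H a.
  assert (Hg : forall s, is_derive (fun r => f r - c * r) s 0).
  { intros s; replace 0 with (c - c * 1) by ring.
    exact (is_derive_minus _ _ _ _ _ (H s) (is_derive_scal _ _ _ _ (is_derive_id s))). }
  assert (Heq : f a - c * a = f 0 - c * 0).
  { destruct (Rtotal_order a 0) as [Hlt|[->|Hgt]]; [|reflexivity|symmetry];
      apply (eq_is_derive (fun r => f r - c * r)); auto. }
  lra.
Qed.

(* The difference quotients coincide, so [f] need not be differentiable. *)
Lemma Derive_plus_const (f : R -> R) c x : Derive (fun r => f r + c) x = Derive f x.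
Proof. unfold Derive; f_equal; apply Lim_ext; intros; f_equal; ring. Qed.

Lemma slice4_affine g d c : smooth4 g -> (forall x y t v, pd4 d g x y t v = c) ->
  forall x y t v s, slice4 d g x y t v s = slice4 d g x y t v 0 + c * s.
Proof.
  intros Hg H x y t v; apply affine_of_const_derive; intros s0.
  destruct d; simpl;
    [rewrite <- (H s0 y t v); apply Derive_correct, (proj1 (Hg []) Dx4 s0 y t v)
    |rewrite <- (H x s0 t v); apply Derive_correct, (proj1 (Hg []) Dy4 x s0 t v)
    |rewrite <- (H x y s0 v); apply Derive_correct, (proj1 (Hg []) Dt4 x y s0 v)
    |rewrite <- (H x y t s0); apply Derive_correct, (proj1 (Hg []) Dv4 x y t s0)].
Qed.

Lemma affine_of_const_partials g a b c d : smooth4 g ->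
  (forall x y t v, pd4 Dx4 g x y t v = a) -> (forall x y t v, pd4 Dy4 g x y t v = b) ->
  (forall x y t v, pd4 Dt4 g x y t v = c) -> (forall x y t v, pd4 Dv4 g x y t v = d) ->
  forall x y t v, g x y t v = g 0 0 0 0 + a * x + b * y + c * t + d * v.
Proof.
  intros Hg Ha Hb Hc Hd x y t v.
  pose proof (slice4_affine g Dx4 a Hg Ha x y t v x) as E1.
  pose proof (slice4_affine g Dy4 b Hg Hb 0 y t v y) as E2.
  pose proof (slice4_affine g Dt4 c Hg Hc 0 0 t v t) as E3.
  pose proof (slice4_affine g Dv4 d Hg Hd 0 0 0 v v) as E4.
  simpl in *; rewrite E1, E2, E3, E4; ring.
Qed.

(** * Necessity: the determining equations *)

Lemma linear_in_w_zero (a b k : R) : k <> 0 ->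
  k * (1 * a + b) = 0 -> k * (2 * a + b) = 0 -> a = 0 /\ b = 0.
Proof.
  intros Hk H1 H2.
  assert (Ha : k * a = 0) by lra.
  apply Rmult_integral in Ha as [|Ha]; [contradiction|subst].
  split; [reflexivity|]; apply Rmult_integral in H1 as [|]; [contradiction|lra].
Qed.

(* The values of [c0 + cp w^p + cm w^(p-1)] at [w = 1, 2, 4], with [u = 2^p]. *)
Lemma three_point_separation c0 cp cm u : u <> 0 -> u <> 1 -> u <> 2 ->
  c0 + cp * 1 + cm * 1 = 0 -> c0 + cp * u + cm * (u / 2) = 0 ->
  c0 + cp * (u * u) + cm * (u * u / 4) = 0 ->
  c0 = 0 /\ cp = 0 /\ cm = 0.
Proof.
  intros H0 H1 H2 E1 E2 E3.
  assert (Ecm : cm * (u * (u - 2)) = 0).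
  { transitivity (-4 * ((c0 + cp * (u * u) + cm * (u * u / 4)) - (c0 + cp * 1 + cm * 1)
       - (u + 1) * ((c0 + cp * u + cm * (u / 2)) - (c0 + cp * 1 + cm * 1)))); [field|].
    rewrite E1, E2, E3; ring. }
  assert (Hcm : cm = 0).
  { apply Rmult_integral in Ecm as [|Ecm]; auto.
    apply Rmult_integral in Ecm as [|]; [contradiction|exfalso; apply H2; lra]. }
  subst cm.
  assert (Ecp : cp * (u - 1) = 0) by lra.
  apply Rmult_integral in Ecp as [Hcp|]; [|exfalso; apply H1; lra].
  subst cp; repeat split; lra.
Qed.

Lemma Rpower_one_l q : Rpower 1 q = 1.
Proof. unfold Rpower; rewrite ln_1, Rmult_0_r; apply exp_0. Qed.

Lemma Rpower_two_inj q q' : Rpower 2 q = Rpower 2 q' -> q = q'.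
Proof.
  intros H; destruct (Rtotal_order q q') as [Hlt|[|Hlt]]; auto;
    apply (Rpower_lt 2) in Hlt; lra.
Qed.

Section Necessity.

Variables (X : vfield) (p s sg2 : R).
Hypothesis HX : smooth_components X.
Hypothesis Hsym : is_point_symmetry p s sg2 X.
Hypothesis Hs : s = 1 \/ s = -1.
Hypothesis Hsg : sg2 = 1 \/ sg2 = -1.
Hypothesis Hp0 : p <> 0.
Hypothesis Hpm1 : p <> -1.

Definition at_jet (rs : list rule) (x y t : R) (L : list jet_entry) : R :=
  prolonged_Delta
    (fun a b c => eval X (simplify (in_support L) rs (phi_expr a b c)) x y t (jet_of L))
    p s sg2 (jet_of L).

Lemma at_jet_zero rs x y t L : rules_hold X rs ->
  0 < jet_of L 1%nat 0%nat 0%nat -> Defs.Delta p s sg2 x y t (jet_of L) = 0 ->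
  at_jet rs x y t L = 0.
Proof.
  intros Hrs Hw HD; unfold at_jet.
  rewrite <- prolong4_Delta_simplified by auto using jet_of_outside.
  apply Hsym; assumption.
Qed.

Ltac jet_side :=
  solve [ assumption
        | unfold Defs.Delta; cbn [entry jet_of jet_index_eqb Nat.eqb andb]; first [lra | ring] ].

(* The jets [L a] and [L b] differ only in the coordinate carrying [z]; the difference
   of the symmetry condition at them is the coefficient of that coordinate. *)
Ltac coefficient rs x y t L a b :=
  transitivity (at_jet rs x y t (L a) - at_jet rs x y t (L b));
  [ unfold L, at_jet; expand_simplified; ring
  | rewrite (at_jet_zero rs x y t (L a)), (at_jet_zero rs x y t (L b)) by (unfold L; jet_side);
    ring ].

Lemma s_neq0 : s <> 0. Proof. destruct Hs; subst; lra. Qed.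
Lemma sg2_neq0 : sg2 <> 0. Proof. destruct Hsg; subst; lra. Qed.

Lemma rules_hold_nil : rules_hold X [].
Proof. constructor. Qed.

Lemma coeff_vxxxt x y t v w : 0 < w ->
  (4 * s) * (w * dcomp X Tau [Dv4] x y t v + dcomp X Tau [Dx4] x y t v) = 0.
Proof.
  intros Hw; pose (L := fun z => [entry 0 0 0 v; entry 1 0 0 w; entry 3 0 1 z]).
  pose proof rules_hold_nil; coefficient (@nil rule) x y t L 1 0.
Qed.

Lemma coeff_vxxxy x y t v w : 0 < w ->
  (4 * s) * (w * dcomp X XiY [Dv4] x y t v + dcomp X XiY [Dx4] x y t v) = 0.
Proof.
  intros Hw; pose (L := fun z => [entry 0 0 0 v; entry 1 0 0 w; entry 3 1 0 z]).
  pose proof rules_hold_nil; coefficient (@nil rule) x y t L 1 0.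
Qed.

Definition rules1 : list rule := [(Tau, [Dv4]); (Tau, [Dx4]); (XiY, [Dv4]); (XiY, [Dx4])].

Lemma rules1_hold : rules_hold X rules1.
Proof.
  assert (Hk : 4 * s <> 0) by (apply Rmult_integral_contrapositive; split; [lra|apply s_neq0]).
  assert (Htau : forall x y t v, dcomp X Tau [Dv4] x y t v = 0 /\ dcomp X Tau [Dx4] x y t v = 0)
    by (intros; apply (linear_in_w_zero _ _ _ Hk); apply coeff_vxxxt; lra).
  assert (Hxiy : forall x y t v, dcomp X XiY [Dv4] x y t v = 0 /\ dcomp X XiY [Dx4] x y t v = 0)
    by (intros; apply (linear_in_w_zero _ _ _ Hk); apply coeff_vxxxy; lra).
  repeat constructor; intros; simpl; [apply Htau|apply Htau|apply Hxiy|apply Hxiy].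
Qed.

Lemma coeff_vxxxx x y t v w : 0 < w ->
  s * (w * (4 * dcomp X XiX [Dv4] x y t v)
       + (4 * dcomp X XiX [Dx4] x y t v - 2 * dcomp X Tau [Dt4] x y t v)) = 0.
Proof.
  intros Hw; pose (L := fun z => [entry 0 0 0 v; entry 1 0 0 w; entry 4 0 0 z; entry 0 0 2 (s * z)]).
  pose proof rules1_hold; coefficient rules1 x y t L 1 0.
Qed.

Lemma xix_v_zero_tau_t x y t v :
  dcomp X XiX [Dv4] x y t v = 0 /\ dcomp X Tau [Dt4] x y t v = 2 * dcomp X XiX [Dx4] x y t v.
Proof.
  destruct (linear_in_w_zero _ _ s s_neq0 (coeff_vxxxx x y t v 1 Rlt_0_1)
              (coeff_vxxxx x y t v 2 ltac:(lra))); split; lra.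
Qed.

Definition rules2 : list rule := (XiX, [Dv4]) :: rules1.

Lemma rules2_hold : rules_hold X rules2.
Proof. constructor; [intros; apply xix_v_zero_tau_t|apply rules1_hold]. Qed.

Lemma coeff_vyy x y t v :
  2 * sg2 * (dcomp X XiY [Dy4] x y t v - dcomp X Tau [Dt4] x y t v) = 0.
Proof.
  pose (L := fun z => [entry 0 0 0 v; entry 1 0 0 1; entry 0 2 0 z; entry 0 0 2 (sg2 * z)]).
  pose proof rules2_hold; coefficient rules2 x y t L 1 0.
Qed.

Lemma coeff_vyt x y t v :
  2 * (sg2 * dcomp X Tau [Dy4] x y t v - dcomp X XiY [Dt4] x y t v) = 0.
Proof.
  pose (L := fun z => [entry 0 0 0 v; entry 1 0 0 1; entry 0 1 1 z]).
  pose proof rules2_hold; coefficient rules2 x y t L 1 0.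
Qed.

Lemma coeff_vxt x y t v : -2 * dcomp X XiX [Dt4] x y t v = 0.
Proof.
  pose (L := fun z => [entry 0 0 0 v; entry 1 0 0 1; entry 1 0 1 z]).
  pose proof rules2_hold; coefficient rules2 x y t L 1 0.
Qed.

Lemma coeff_vxy x y t v : 2 * sg2 * dcomp X XiX [Dy4] x y t v = 0.
Proof.
  pose (L := fun z => [entry 0 0 0 v; entry 1 0 0 1; entry 1 1 0 z]).
  pose proof rules2_hold; coefficient rules2 x y t L 1 0.
Qed.

(* The condition is quadratic in [v_t]; its second difference is [2 eta_vv]. *)
Lemma second_diff_vt x y t v : 2 * dcomp X Eta [Dv4; Dv4] x y t v = 0.
Proof.
  pose (L := fun z => [entry 0 0 0 v; entry 1 0 0 1; entry 0 0 1 z]).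
  pose proof rules2_hold.
  transitivity ((at_jet rules2 x y t (L 1) - at_jet rules2 x y t (L 0))
                + (at_jet rules2 x y t (L (-1)) - at_jet rules2 x y t (L 0))).
  - unfold L, at_jet; expand_simplified; ring.
  - rewrite !at_jet_zero by (unfold L; jet_side); ring.
Qed.

Lemma first_order_eqs x y t v :
  dcomp X XiY [Dy4] x y t v = dcomp X Tau [Dt4] x y t v /\
  dcomp X XiY [Dt4] x y t v = sg2 * dcomp X Tau [Dy4] x y t v /\
  dcomp X XiX [Dt4] x y t v = 0 /\ dcomp X XiX [Dy4] x y t v = 0 /\
  dcomp X Eta [Dv4; Dv4] x y t v = 0.
Proof.
  pose proof (coeff_vyy x y t v) as H1; pose proof (coeff_vyt x y t v) as H2.
  pose proof (coeff_vxt x y t v); pose proof (coeff_vxy x y t v) as H4.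
  pose proof (second_diff_vt x y t v).
  assert (Hk : 2 * sg2 <> 0) by (pose proof sg2_neq0; lra).
  apply Rmult_integral in H1 as [|H1]; [contradiction|].
  apply Rmult_integral in H4 as [|H4]; [contradiction|].
  repeat split; lra.
Qed.

Definition rules3 : list rule := [(XiX, [Dt4]); (XiX, [Dy4]); (Eta, [Dv4; Dv4])] ++ rules2.

Lemma rules3_hold : rules_hold X rules3.
Proof.
  apply rules_hold_app; [|apply rules2_hold].
  repeat constructor; intros; simpl; apply first_order_eqs.
Qed.

Ltac vanish rs Hrs :=
  intros;
  try match goal with
  | |- pd4 ?d (dcomp X ?k ?l) ?x ?y ?t ?v = 0 => change (dcomp X k (d :: l) x y t v = 0)
  | |- pd4 ?d (component_of X ?k) ?x ?y ?t ?v = 0 => change (dcomp X k [d] x y t v = 0)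
  end;
  apply (vanishes_sound X rs _ _ HX Hrs); reflexivity.

Definition scaling : R := dcomp X XiX [Dx4] 0 0 0 0.

Lemma xix_x_const x y t v : dcomp X XiX [Dx4] x y t v = scaling.
Proof.
  assert (Hxx : forall x y t v, pd4 Dx4 (dcomp X XiX [Dx4]) x y t v = 0).
  { intros x' y' t' v'.
    assert (E : forall r, dcomp X XiX [Dx4] r y' t' v' = / 2 * dcomp X Tau [Dt4] r y' t' v')
      by (intros; rewrite (proj2 (xix_v_zero_tau_t _ _ _ _)); field).
    change (Derive (fun r => dcomp X XiX [Dx4] r y' t' v') x' = 0).
    rewrite (Derive_ext _ _ _ E), Derive_scal.
    change (Derive _ x') with (dcomp X Tau [Dx4; Dt4] x' y' t' v').
    rewrite (vanishes_sound X rules1 _ _ HX rules1_hold) by reflexivity; ring. }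
  rewrite (affine_of_const_partials (dcomp X XiX [Dx4]) 0 0 0 0
             (smooth4_dcomp X XiX [Dx4] HX) Hxx); try vanish rules3 rules3_hold.
  unfold scaling; ring.
Qed.

Lemma tau_t_const x y t v : dcomp X Tau [Dt4] x y t v = 2 * scaling.
Proof. rewrite (proj2 (xix_v_zero_tau_t x y t v)), xix_x_const; reflexivity. Qed.

Lemma xiy_y_const x y t v : dcomp X XiY [Dy4] x y t v = 2 * scaling.
Proof. rewrite (proj1 (first_order_eqs x y t v)); apply tau_t_const. Qed.

Definition rules4 : list rule :=
  [(XiX, [Dx4; Dx4]); (Tau, [Dt4; Dt4]); (Tau, [Dy4; Dt4]); (XiY, [Dy4; Dy4]); (XiY, [Dt4; Dy4])]
  ++ rules3.

Lemma rules4_hold : rules_hold X rules4.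
Proof.
  apply rules_hold_app; [|apply rules3_hold].
  repeat constructor; simpl; eapply pd4_pd4_const; intros;
    solve [apply xix_x_const | apply tau_t_const | apply xiy_y_const].
Qed.

Definition boost : R := dcomp X Tau [Dy4] 0 0 0 0.

(* [tau_y] depends on [y] only and [xi^y_t] on [t] only, and [xi^y_t = sg2 tau_y]. *)
Lemma boost_coeffs x y t v :
  dcomp X Tau [Dy4] x y t v = boost /\ dcomp X XiY [Dt4] x y t v = sg2 * boost.
Proof.
  assert (Htau : forall x y t v, dcomp X Tau [Dy4] x y t v = dcomp X Tau [Dy4] 0 y 0 0).
  { intros x' y' t' v'; pose proof (smooth4_dcomp X Tau [Dy4] HX) as Hg.
    pose proof (slice4_affine _ Dx4 0 Hg ltac:(vanish rules4 rules4_hold) x' y' t' v' x') as E1.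
    pose proof (slice4_affine _ Dt4 0 Hg ltac:(vanish rules4 rules4_hold) 0 y' t' v' t') as E2.
    pose proof (slice4_affine _ Dv4 0 Hg ltac:(vanish rules4 rules4_hold) 0 y' 0 v' v') as E3.
    cbn [slice4] in E1, E2, E3; rewrite E1, E2, E3; ring. }
  assert (Hxiy : forall x y t v, dcomp X XiY [Dt4] x y t v = dcomp X XiY [Dt4] 0 0 t 0).
  { intros x' y' t' v'; pose proof (smooth4_dcomp X XiY [Dt4] HX) as Hg.
    pose proof (slice4_affine _ Dx4 0 Hg ltac:(vanish rules4 rules4_hold) x' y' t' v' x') as E1.
    pose proof (slice4_affine _ Dy4 0 Hg ltac:(vanish rules4 rules4_hold) 0 y' t' v' y') as E2.
    pose proof (slice4_affine _ Dv4 0 Hg ltac:(vanish rules4 rules4_hold) 0 0 t' v' v') as E3.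
    cbn [slice4] in E1, E2, E3; rewrite E1, E2, E3; ring. }
  assert (Hky : forall y, dcomp X Tau [Dy4] 0 y 0 0 = boost).
  { intros y'; unfold boost.
    assert (Hsq : sg2 * sg2 = 1) by (destruct Hsg; subst; ring).
    rewrite <- (Rmult_1_l (dcomp X Tau [Dy4] 0 y' 0 0)), <- Hsq, Rmult_assoc,
      <- (proj1 (proj2 (first_order_eqs 0 y' 0 0))), Hxiy,
      (proj1 (proj2 (first_order_eqs 0 0 0 0))), <- Rmult_assoc, Hsq; ring. }
  rewrite Htau, Hky, (proj1 (proj2 (first_order_eqs x y t v))), Htau, Hky; split; reflexivity.
Qed.

Lemma coeff_vxx x y t v w : 0 < w ->
  (2 * dcomp X XiX [Dx4] x y t v - 2 * dcomp X Tau [Dt4] x y t v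
     - 6 * s * dcomp X Eta [Dx4; Dx4; Dv4] x y t v)
  + Rpower w p * (2 * p + 2) * (dcomp X XiX [Dx4] x y t v - dcomp X Tau [Dt4] x y t v)
  + w * Rpower w (p - 1) * (p * p + p) * (dcomp X XiX [Dx4] x y t v - dcomp X Eta [Dv4] x y t v)
  - Rpower w (p - 1) * (p * p + p) * dcomp X Eta [Dx4] x y t v = 0.
Proof.
  intros Hw.
  pose (L := fun z => [entry 0 0 0 v; entry 1 0 0 w; entry 2 0 0 z;
                       entry 0 0 2 ((1 + (p + 1) * Rpower w p) * z)]).
  pose proof rules4_hold; coefficient rules4 x y t L 1 0.
Qed.

Lemma coeff_vxx_powers x y t v w : 0 < w ->
  (-2 * scaling - 6 * s * dcomp X Eta [Dx4; Dx4; Dv4] x y t v)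
  + Rpower w p * (p * (p + 1) * (scaling - dcomp X Eta [Dv4] x y t v) - 2 * (p + 1) * scaling)
  + Rpower w p / w * (- p * (p + 1) * dcomp X Eta [Dx4] x y t v) = 0.
Proof.
  intros Hw.
  assert (Hpm : Rpower w (p - 1) = Rpower w p / w)
    by (unfold Rminus; rewrite Rpower_plus, Rpower_Ropp, Rpower_1 by exact Hw; reflexivity).
  rewrite <- (coeff_vxx x y t v w Hw), xix_x_const, tau_t_const, Hpm.
  field; lra.
Qed.

Lemma eta_x_v_p1 : p = 1 -> forall x y t v,
  dcomp X Eta [Dx4] x y t v = - scaling /\ dcomp X Eta [Dv4] x y t v = - scaling.
Proof.
  intros Hp1.
  assert (Hv : forall x y t v, dcomp X Eta [Dv4] x y t v = - scaling).
  { intros x y t v.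
    pose proof (coeff_vxx_powers x y t v 1 Rlt_0_1) as A1.
    pose proof (coeff_vxx_powers x y t v 2 ltac:(lra)) as A2.
    subst p; rewrite !Rpower_1 in A1, A2 by lra; lra. }
  intros x y t v; split; [|apply Hv].
  pose proof (coeff_vxx_powers x y t v 1 Rlt_0_1) as A1.
  assert (Hxxv : dcomp X Eta [Dx4; Dx4; Dv4] x y t v = 0).
  { assert (Hr : rules_hold X [(Eta, [Dx4; Dv4])])
      by (repeat constructor; apply pd4_pd4_const with (c := - scaling), Hv).
    vanish [(Eta, [Dx4; Dv4])] Hr. }
  rewrite Hxxv, (Hv x y t v), Rpower_one_l in A1; subst p; lra.
Qed.

Lemma eta_x_zero_pn1 : p <> 1 -> forall x y t v,
  dcomp X Eta [Dx4] x y t v = 0 /\ scaling = 0 /\ dcomp X Eta [Dv4] x y t v = 0.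
Proof.
  intros Hp1.
  assert (Hu : Rpower 2 p <> 0 /\ Rpower 2 p <> 1 /\ Rpower 2 p <> 2).
  { split; [apply Rgt_not_eq, exp_pos|split; intros E].
    - apply Hp0, Rpower_two_inj; rewrite Rpower_O; lra.
    - apply Hp1, Rpower_two_inj; rewrite Rpower_1; lra. }
  assert (Hpp : p * (p + 1) <> 0)
    by (apply Rmult_integral_contrapositive; split; [|intros E; apply Hpm1]; lra).
  assert (Hsep : forall x y t v,
    (-2 * scaling - 6 * s * dcomp X Eta [Dx4; Dx4; Dv4] x y t v) = 0 /\
    p * (p + 1) * (scaling - dcomp X Eta [Dv4] x y t v) - 2 * (p + 1) * scaling = 0 /\
    - p * (p + 1) * dcomp X Eta [Dx4] x y t v = 0).
  { intros x y t v; destruct Hu as (Hu0 & Hu1 & Hu2).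
    apply (three_point_separation _ _ _ (Rpower 2 p)); auto.
    - rewrite <- (coeff_vxx_powers x y t v 1 Rlt_0_1), Rpower_one_l; field.
    - rewrite <- (coeff_vxx_powers x y t v 2 ltac:(lra)); field.
    - assert (H4 : Rpower 4 p = Rpower 2 p * Rpower 2 p)
        by (rewrite Rpower_mult_distr by lra; f_equal; ring).
      rewrite <- (coeff_vxx_powers x y t v 4 ltac:(lra)), H4; field. }
  assert (Hx : forall x y t v, dcomp X Eta [Dx4] x y t v = 0).
  { intros x y t v; destruct (Hsep x y t v) as (_ & _ & H).
    replace (- p * (p + 1) * dcomp X Eta [Dx4] x y t v)
      with (- (p * (p + 1) * dcomp X Eta [Dx4] x y t v)) in H by ring.
    apply Ropp_eq_0_compat in H; rewrite Ropp_involutive in H.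
    apply Rmult_integral in H as [|]; [contradiction|assumption]. }
  assert (Hkx : scaling = 0).
  { destruct (Hsep 0 0 0 0) as (H & _).
    assert (Hr : rules_hold X [(Eta, [Dx4])]) by (repeat constructor; apply Hx).
    assert (Hxxv : dcomp X Eta [Dx4; Dx4; Dv4] 0 0 0 0 = 0) by vanish [(Eta, [Dx4])] Hr.
    rewrite Hxxv in H; lra. }
  intros x y t v; split; [apply Hx|split; [exact Hkx|]].
  destruct (Hsep x y t v) as (_ & H & _); rewrite Hkx in H.
  replace (p * (p + 1) * (0 - dcomp X Eta [Dv4] x y t v) - 2 * (p + 1) * 0)
    with (- (p * (p + 1) * dcomp X Eta [Dv4] x y t v)) in H by ring.
  apply Ropp_eq_0_compat in H; rewrite Ropp_involutive in H.
  apply Rmult_integral in H as [|]; [contradiction|assumption].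
Qed.

Lemma eta_x_v x y t v :
  dcomp X Eta [Dx4] x y t v = - scaling /\ dcomp X Eta [Dv4] x y t v = - scaling.
Proof.
  destruct (Req_dec p 1) as [Hp1|Hp1]; [apply eta_x_v_p1, Hp1|].
  destruct (eta_x_zero_pn1 Hp1 x y t v) as (-> & -> & ->); split; ring.
Qed.

Definition rules5 : list rule :=
  [(Eta, [Dx4; Dx4]); (Eta, [Dy4; Dx4]); (Eta, [Dt4; Dx4]);
   (Eta, [Dx4; Dv4]); (Eta, [Dy4; Dv4]); (Eta, [Dt4; Dv4])] ++ rules4.

Lemma rules5_hold : rules_hold X rules5.
Proof.
  apply rules_hold_app; [|apply rules4_hold].
  repeat constructor; simpl; apply pd4_pd4_const with (c := - scaling); apply eta_x_v.
Qed.

Lemma eta_wave x y t v :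
  dcomp X Eta [Dt4; Dt4] x y t v - sg2 * dcomp X Eta [Dy4; Dy4] x y t v = 0.
Proof.
  pose proof rules5_hold.
  transitivity (at_jet rules5 x y t [entry 0 0 0 v; entry 1 0 0 1]).
  - unfold at_jet; expand_simplified; ring.
  - apply at_jet_zero; jet_side.
Qed.

Lemma in_span_of_symmetry (b : bool) : (b = false -> p <> 1) -> in_span sg2 b X.
Proof.
  intros Hb.
  exists (xi_x X 0 0 0 0), (xi_y X 0 0 0 0), (tau X 0 0 0 0), boost, scaling, (fun y t => eta X 0 y t 0).
  split; [|split].
  - intros Hf; apply (eta_x_zero_pn1 (Hb Hf) 0 0 0 0).
  - intros y t; exact (eta_wave 0 y t 0).
  - intros x y t v; repeat split.
    + change (xi_x X x y t v) with (component_of X XiX x y t v).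
      rewrite (affine_of_const_partials _ scaling 0 0 0 (HX XiX) xix_x_const);
        [cbn [component_of]; ring|vanish rules3 rules3_hold..].
    + change (xi_y X x y t v) with (component_of X XiY x y t v).
      rewrite (affine_of_const_partials _ 0 (2 * scaling) (sg2 * boost) 0 (HX XiY));
        [cbn [component_of]; ring|vanish rules1 rules1_hold|apply xiy_y_const|apply boost_coeffs|vanish rules1 rules1_hold].
    + change (tau X x y t v) with (component_of X Tau x y t v).
      rewrite (affine_of_const_partials _ 0 boost (2 * scaling) 0 (HX Tau));
        [cbn [component_of]; ring|vanish rules1 rules1_hold|apply boost_coeffs|apply tau_t_const|vanish rules1 rules1_hold].
    + pose proof (slice4_affine (eta X) Dx4 (- scaling) (HX Eta) (fun x y t v => proj1 (eta_x_v x y t v))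
                    x y t v x) as E1.
      pose proof (slice4_affine (eta X) Dv4 (- scaling) (HX Eta) (fun x y t v => proj2 (eta_x_v x y t v))
                    0 y t v v) as E2.
      simpl in E1, E2; rewrite E1, E2; ring.
Qed.

End Necessity.

(** * Sufficiency *)

Section Sufficiency.

Variables (X : vfield) (p s sg2 c1 c2 c3 c4 c5 : R) (P : R -> R -> R).
Hypothesis HX : smooth_components X.
Hypothesis Hxi_x : forall x y t v, xi_x X x y t v = c1 + c5 * x.
Hypothesis Hxi_y : forall x y t v, xi_y X x y t v = c2 + c4 * (sg2 * t) + c5 * (2 * y).
Hypothesis Htau : forall x y t v, tau X x y t v = c3 + c4 * y + c5 * (2 * t).
Hypothesis Heta : forall x y t v, eta X x y t v = P y t + c5 * (- (v + x)).
Hypothesis HP : wave_sol sg2 P.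

Ltac affine_derivative :=
  unfold dcomp, pd4; cbn [iter_pd4 fold_right component_of slice4 coord4];
  apply Derive_affine; intros; cbn [slice4]; rewrite ?Hxi_x, ?Hxi_y, ?Htau, ?Heta; ring.

Lemma span_first_derivs x y t v :
  dcomp X XiX [Dx4] x y t v = c5 /\
  dcomp X XiY [Dy4] x y t v = 2 * c5 /\ dcomp X XiY [Dt4] x y t v = sg2 * c4 /\
  dcomp X Tau [Dy4] x y t v = c4 /\ dcomp X Tau [Dt4] x y t v = 2 * c5 /\
  dcomp X Eta [Dx4] x y t v = - c5 /\ dcomp X Eta [Dv4] x y t v = - c5.
Proof. repeat split; affine_derivative. Qed.

Definition rules_span : list rule :=
  [(XiX, [Dy4]); (XiX, [Dt4]); (XiX, [Dv4]); (XiX, [Dx4; Dx4]);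
   (XiY, [Dx4]); (XiY, [Dv4]); (XiY, [Dy4; Dy4]); (XiY, [Dt4; Dy4]); (XiY, [Dt4; Dt4]);
   (Tau, [Dx4]); (Tau, [Dv4]); (Tau, [Dy4; Dy4]); (Tau, [Dt4; Dy4]); (Tau, [Dt4; Dt4]);
   (Eta, [Dx4; Dx4]); (Eta, [Dy4; Dx4]); (Eta, [Dt4; Dx4]); (Eta, [Dv4; Dx4]);
   (Eta, [Dy4; Dv4]); (Eta, [Dt4; Dv4]); (Eta, [Dv4; Dv4])].

Lemma rules_span_hold : rules_hold X rules_span.
Proof.
  repeat constructor; cbn [fst snd];
    match goal with
    | |- forall x y t v, dcomp X _ [_] x y t v = 0 => intros; affine_derivative
    | |- forall x y t v, dcomp X XiX [_; Dx4] x y t v = 0 => apply (pd4_pd4_const _ _ c5)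
    | |- forall x y t v, dcomp X XiY [_; Dy4] x y t v = 0 => apply (pd4_pd4_const _ _ (2 * c5))
    | |- forall x y t v, dcomp X XiY [_; Dt4] x y t v = 0 => apply (pd4_pd4_const _ _ (sg2 * c4))
    | |- forall x y t v, dcomp X Tau [_; Dy4] x y t v = 0 => apply (pd4_pd4_const _ _ c4)
    | |- forall x y t v, dcomp X Tau [_; Dt4] x y t v = 0 => apply (pd4_pd4_const _ _ (2 * c5))
    | |- forall x y t v, dcomp X Eta [_; _] x y t v = 0 => apply (pd4_pd4_const _ _ (- c5))
    end; intros; affine_derivative.
Qed.

Lemma eta_wave_span x y t v :
  dcomp X Eta [Dt4; Dt4] x y t v = sg2 * dcomp X Eta [Dy4; Dy4] x y t v.
Proof.
  assert (Ht : forall r, Derive (fun r' => eta X x y r' v) r = Derive (fun r' => P y r') r)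
    by (intros; rewrite (Derive_ext _ _ _ (fun r' => Heta x y r' v)); apply Derive_plus_const).
  assert (Hy : forall r, Derive (fun r' => eta X x r' t v) r = Derive (fun r' => P r' t) r)
    by (intros; rewrite (Derive_ext _ _ _ (fun r' => Heta x r' t v)); apply Derive_plus_const).
  change (Derive (fun r => Derive (fun r' => eta X x y r' v) r) t
          = sg2 * Derive (fun r => Derive (fun r' => eta X x r' t v) r) y).
  rewrite (Derive_ext _ _ _ Ht), (Derive_ext _ _ _ Hy).
  apply Rminus_diag_uniq, HP.
Qed.

Hypothesis Hc5 : p <> 1 -> c5 = 0.

Lemma symmetry_of_span : is_point_symmetry p s sg2 X.
Proof.
  intros x y t j Hw HD.
  rewrite (prolong4_Delta_simplified X p s sg2 (fun _ _ _ => true) rules_span)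
    by (auto using rules_span_hold; discriminate).
  expand_simplified.
  destruct (span_first_derivs x y t (j 0%nat 0%nat 0%nat)) as (-> & -> & -> & -> & -> & -> & ->).
  rewrite eta_wave_span.
  unfold Defs.Delta in HD.
  replace (j 0%nat 0%nat 2%nat) with
    (j 2%nat 0%nat 0%nat + (p + 1) * Rpower (j 1%nat 0%nat 0%nat) p * j 2%nat 0%nat 0%nat
     + s * j 4%nat 0%nat 0%nat + sg2 * j 0%nat 2%nat 0%nat) by lra.
  destruct (Req_dec p 1) as [->|Hp1].
  - rewrite Rminus_diag, Rpower_O, Rpower_1 by exact Hw; ring.
  - rewrite (Hc5 Hp1); ring.
Qed.

End Sufficiency.

Theorem theorem3p2 :
  forall (p s sg2 : R),
    p <> 0 -> p <> -1 ->
    (s = 1 \/ s = -1) ->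
    (sg2 = 1 \/ sg2 = -1) ->
    forall X : vfield, smooth_vf X ->
      (p <> 1 -> (is_point_symmetry p s sg2 X <-> in_span sg2 false X)) /\
      (p = 1 -> (is_point_symmetry p s sg2 X <-> in_span sg2 true X)).
Proof.
  intros p s sg2 Hp0 Hpm1 Hs Hsg X HXv.
  pose proof (smooth_components_of X HXv) as HX.
  assert (Hiff : forall b, (b = false <-> p <> 1) ->
            (is_point_symmetry p s sg2 X <-> in_span sg2 b X)).
  { intros b Hb; split.
    - intros Hsym; apply (in_span_of_symmetry X p s sg2 HX Hsym Hs Hsg Hp0 Hpm1), Hb.
    - intros (c1 & c2 & c3 & c4 & c5 & P & Hc5 & HP & Hf).
      apply (symmetry_of_span X p s sg2 c1 c2 c3 c4 c5 P HX); auto; try apply Hf.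
      intros Hp1; apply Hc5, Hb, Hp1. }
  split; intros Hp1; apply Hiff; split; congruence.
Qed.
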